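(* Let $T$ be a continuous linear operator on a topological vector space $X$ and let $\mathcal F$ be a block family. Then $T$ is $\mathcal F$-hypercyclic if and only if $T$ is hypercyclic and has the $\mathscr P_{\mathcal F}$ property.
   Context: $\mathbb N$ denotes the nonnegative integers. A Furstenberg family is a nonempty collection $\mathcal F\subseteq\mathcal P(\mathbb N)$ with $\emptyset\notin\mathcal F$ which is hereditarily upward ($A\in\mathcal F$, $A\subseteq B$ imply $B\in\mathcal F$). The block family $b\mathcal F$: $S\in b\mathcal F$ iff there is $F\in\mathcal F$ such that for every finite $R\subseteq F$ there is $n\in\mathbb N$ with $R+n\subseteq S$. A Furstenberg family $\mathcal F$ is called a block family if $b\mathcal F=\mathcal F$. For $x\in X$ and $U\subseteq X$, $N_T(x,U)=\{n\in\mathbb N:T^nx\in U\}$. $T$ is $\mathcal F$-hypercyclic if there is $x\in X$ with $N_T(x,U)\in\mathcal F$ for every nonempty open $U$; $T$ is hypercyclic if some $x$ has dense orbit $\{T^nx:n\in\mathbb N\}$. $T$ has the $\mathscr P_{\mathcal F}$ property if for every nonempty open set $U\subseteq X$ there is $x\in X$ with $N_T(x,U)\in\mathcal F$. *)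

From HB Require Import structures.
From mathcomp Require Import all_boot all_order all_algebra.
From mathcomp Require Import all_classical all_reals all_analysis.
Set Implicit Arguments. Unset Strict Implicit. Unset Printing Implicit Defensive.
Import Order.TTheory GRing.Theory Num.Theory.
Local Open Scope classical_set_scope.

Definition furstenberg_family (F : set (set nat)) : Prop :=
  [/\ F !=set0, ~ F set0 & forall A B, F A -> A `<=` B -> F B].

Definition block_of (F : set (set nat)) : set (set nat) :=
  [set S | exists2 G, F G &
     forall R : set nat, finite_set R -> R `<=` G ->
       exists n : nat, [set (r + n)%N | r in R] `<=` S].

Definition block_family (F : set (set nat)) : Prop :=
  furstenberg_family F /\ block_of F = F.

Definition return_set (X : Type) (T : X -> X) (x : X) (U : set X) : set nat :=
  [set n | U (iter n T x)].

Definition F_hypercyclic (X : topologicalType) (F : set (set nat)) (T : X -> X) :=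
  exists x : X, forall U : set X, open U -> U !=set0 -> F (return_set T x U).

Definition hypercyclic (X : topologicalType) (T : X -> X) :=
  exists x : X, dense (range (fun n : nat => iter n T x)).

Definition P_property (X : topologicalType) (F : set (set nat)) (T : X -> X) :=
  forall U : set X, open U -> U !=set0 -> exists x : X, F (return_set T x U).

From HB Require Import structures.
From mathcomp Require Import all_boot all_order all_algebra.
From mathcomp Require Import all_classical all_reals all_analysis.
Import Order.TTheory GRing.Theory Num.Theory.
Local Open Scope classical_set_scope.

(* If [N_T(y,U)] lies in [F] and [x] has a dense orbit, then every finite
   [R] contained in [N_T(y,U)] gives the open set [V_R = ⋂_{r ∈ R} T^{-r} U],
   which contains [y]; the orbit of [x] enters [V_R] at some time [n], and
   then [R + n ⊆ N_T(x,U)]. Hence [N_T(x,U) ∈ bF = F]. *)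

Lemma continuous_iter (X : topologicalType) (f : X -> X) :
  continuous f -> forall n, continuous (iter n f).
Proof.
move=> fc; elim=> [|n IH] /= x; first exact: cvg_id.
exact: (continuous_comp (IH x) (fc _)).
Qed.

Lemma finite_bigcap_open (X : topologicalType) (I : choiceType) (D : set I)
    (A : I -> set X) :
  finite_set D -> (forall i, D i -> open (A i)) -> open (\bigcap_(i in D) A i).
Proof.
move=> finD Aop; rewrite openE => p DAp.
rewrite /interior -(fset_setK finD); apply: filter_bigI => i.
rewrite in_fset_set // inE => Di.
by have := Aop i Di; rewrite openE; apply; exact: DAp.
Qed.

Lemma open_bigcap_preimage_iter (X : topologicalType) (f : X -> X)
    (R : set nat) (U : set X) :
  continuous f -> open U -> finite_set R ->
  open (\bigcap_(r in R) (iter r f @^-1` U)).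
Proof.
move=> fc oU finR; apply: finite_bigcap_open => // r _.
by apply: open_comp => // x _; exact: continuous_iter.
Qed.

Lemma dense_orbit_return_set_shift (X : topologicalType) (f : X -> X)
    (x y : X) (U : set X) (R : set nat) :
  continuous f -> dense (range (fun n => iter n f x)) -> open U ->
  finite_set R -> R `<=` return_set f y U ->
  exists n, [set (r + n)%N | r in R] `<=` return_set f x U.
Proof.
move=> fc dx oU finR RN.
have [z [Vz [n _ nz]]] :
    \bigcap_(r in R) (iter r f @^-1` U) `&` range (fun n => iter n f x) !=set0.
  apply: dx; last exact: open_bigcap_preimage_iter.
  by exists y => r /RN.
subst z; exists n => _ [r Rr <-]; rewrite /return_set /= iterD.
exact: Vz.
Qed.

Lemma F_hypercyclic_hypercyclic (X : topologicalType) (F : set (set nat))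
    (f : X -> X) :
  ~ F set0 -> F_hypercyclic F f -> hypercyclic f.
Proof.
move=> F0 [x Fx]; exists x => O O0 oO.
have [n On] : return_set f x O !=set0.
  by apply/set0P/eqP => E; apply: F0; rewrite -E; exact: Fx.
by exists (iter n f x); split => //; exists n.
Qed.

Theorem mainTheorem4 (K : numFieldType) (X : topologicalLmodType K)
  (T : {linear X -> X}) (F : set (set nat)) :
  continuous T -> block_family F ->
  (F_hypercyclic F T <-> hypercyclic T /\ P_property F T).
Proof.
move=> Tc [[_ F0 _] bF]; split.
  move=> Fhc; split; first exact: F_hypercyclic_hypercyclic Fhc.
  by move=> U oU U0; have [x Fx] := Fhc; exists x; exact: Fx.
move=> [[x dx] HP]; exists x => U oU U0.
have [y Fy] := HP U oU U0.
rewrite -bF; exists (return_set T y U) => // R finR RN.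
exact: dense_orbit_return_set_shift Tc dx oU finR RN.
Qed.
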